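(* Assume $N_k=N>0$ for all $k\in[n]$ and $F\ge nN$. Let $\boldsymbol O^*\in\mathbb R^{\mathcal N}$ be given by $O^*_{\mathcal N}=N/2$ and $O^*_i=0$ for $i<\mathcal N$ (i.e. the whole group $[n]$ uniquely shares $N/2$ points and no other subgroup shares any). Then $\boldsymbol O^*\in\Omega$ and $\boldsymbol O^*$ is a global maximiser of $T$ over $\Omega$, i.e. $T(\boldsymbol O)\le T(\boldsymbol O^* )$ for all $\boldsymbol O\in\Omega$.
   Context: Fix an integer $n\ge2$ and write $[m]=\{1,\dots,m\}$. Let $\mathcal X$ be the collection of subsets of $[n]$ with at least two elements, $\mathcal N=2^n-n-1$, and let $I:\mathcal X\to[\mathcal N]$ be a bijection such that $A\subsetneq B$ implies $I(A)<I(B)$ (so $I([n])=\mathcal N$). Write $f(c)=|I^{-1}(c)|$, $S(c)=\{i\in[\mathcal N]:I^{-1}(c)\subseteq I^{-1}(i)\}$, $B(c)=\{i\in[\mathcal N]:I^{-1}(i)\subsetneq I^{-1}(c)\}$, and for $k\in[n]$, $\tilde S(k)=\{i\in[\mathcal N]:k\in I^{-1}(i)\}$. With effective knowledges $N_k'=\min\{N_k,F\}$ (here all equal to $N$), the objective is $$T(\boldsymbol O)=\sum_{c=1}^{\mathcal N}\frac{\sum_{a\in S(c)}O_a}{\prod_{k\in I^{-1}(c)}N_k'}\Big(\sum_{k\in I^{-1}(c)}N_k'-f(c)\sum_{a\in S(c)}O_a-(f(c)-1)\sum_{a\in B(c)}O_a\Big).$$ The (relaxed, real-valued) feasible region is $\Omega=\{\boldsymbol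 O\in\mathbb R^{\mathcal N}:\boldsymbol O\ge\boldsymbol 0,\ \sum_{i\in\tilde S(k)}O_i\le N_k'\ \forall k\in[n],\ \sum_{k=1}^nN_k'-\sum_{c=1}^{\mathcal N}(f(c)-1)O_c\le F\}$; under the stated assumptions this is $\{\boldsymbol O\ge\boldsymbol 0:\sum_{i\in\tilde S(k)}O_i\le N\ \forall k\}$. *)

From mathcomp Require Import all_boot all_order all_algebra.
Set Implicit Arguments. Unset Strict Implicit. Unset Printing Implicit Defensive.
Import Order.TTheory GRing.Theory Num.Theory.
Local Open Scope ring_scope.

(* Number of subsets of [n] with at least two elements: 2^n - n - 1. *)
Definition Ncal (n : nat) : nat := (2 ^ n - n - 1)%N.

(* The inverse of the bijection I : X -> [Ncal].  Indices are 0-based: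
   paper index c in [Ncal] corresponds to ordinal c-1 in 'I_(Ncal n).
   Players [n] are 'I_n. *)
Definition is_index_bijection (n : nat) (Iinv : 'I_(Ncal n) -> {set 'I_n}) : Prop :=
  [/\ injective Iinv,
      (forall c, 2 <= #|Iinv c|)%N,
      (forall A : {set 'I_n}, (2 <= #|A|)%N -> exists c, Iinv c = A)
    & (forall c d, Iinv c \proper Iinv d -> (c < d)%N)].

Section Objective.
Variables (R : realFieldType) (n : nat) (Iinv : 'I_(Ncal n) -> {set 'I_n}).
Variables (Nk : 'I_n -> R) (F : R).

Definition Neff (k : 'I_n) : R := Num.min (Nk k) F.

Definition fsize (c : 'I_(Ncal n)) : R := (#|Iinv c|)%:R.

Definition Sset (c : 'I_(Ncal n)) : {set 'I_(Ncal n)} :=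
  [set i | Iinv c \subset Iinv i].

Definition Bset (c : 'I_(Ncal n)) : {set 'I_(Ncal n)} :=
  [set i | Iinv i \proper Iinv c].

Definition Stilde (k : 'I_n) : {set 'I_(Ncal n)} :=
  [set i | k \in Iinv i].

Definition Tobj (O : 'I_(Ncal n) -> R) : R :=
  \sum_(c < Ncal n)
    ((\sum_(a in Sset c) O a) / (\prod_(k in Iinv c) Neff k) *
     (\sum_(k in Iinv c) Neff k
      - fsize c * (\sum_(a in Sset c) O a)
      - (fsize c - 1) * (\sum_(a in Bset c) O a))).

Definition Omega (O : 'I_(Ncal n) -> R) : Prop :=
  [/\ (forall i, 0 <= O i),
      (forall k, \sum_(i in Stilde k) O i <= Neff k)
    & \sum_(k < n) Neff k - \sum_(c < Ncal n) (fsize c - 1) * O c <= F].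

End Objective.

(* O*: the last index (paper index Ncal, i.e. I([n])) gets N/2, all others 0. *)
Definition Ostar (R : realFieldType) (n : nat) (N : R) (i : 'I_(Ncal n)) : R :=
  if val i == (Ncal n).-1 then N / 2 else 0.

From mathcomp Require Import all_boot all_order all_algebra.
From mathcomp Require Import ring lra.
Set Implicit Arguments. Unset Strict Implicit. Unset Printing Implicit Defensive.
Import Order.TTheory GRing.Theory Num.Theory.
Local Open Scope ring_scope.

(* With all knowledges equal to [N <= F], the [c]-th summand of [T] is
   [s / P * (f N - f s - (f - 1) b)] with [s, b >= 0], [f >= 1], [P > 0],
   where [s] and [b] are the loads of [S(c)] and [B(c)].  It is at most its
   value at [s = N/2, b = 0], which is exactly what [O*] achieves for every
   [c] at once: [[n]] lies in every [S(c)] and in no [B(c)]. *)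

Lemma objective_term_le (R : realFieldType) (N f s b P : R) :
  0 < P -> 1 <= f -> 0 <= s -> 0 <= b ->
  s / P * (f * N - f * s - (f - 1) * b)
  <= N / 2 / P * (f * N - f * (N / 2) - (f - 1) * 0).
Proof.
move=> P_gt0 f_ge1 s_ge0 b_ge0.
rewrite (mulrAC s) (mulrAC (N / 2)).
apply: ler_wpM2r; first by rewrite invr_ge0 ltW.
(* [f N^2 / 4 - s (f N - f s - (f - 1) b) = f (s - N/2)^2 + (f - 1) s b] *)
have sq_ge0 : 0 <= f * (s - N / 2) ^+ 2 by apply: mulr_ge0; [lra | exact: sqr_ge0].
have sb_ge0 : 0 <= (f - 1) * s * b by apply: mulr_ge0; [apply: mulr_ge0; lra | done].
nra.
Qed.

Section IndexBijection.
Variables (n : nat) (Iinv : 'I_(Ncal n) -> {set 'I_n}).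
Hypothesis Iinv_bij : is_index_bijection Iinv.

Lemma fsize_ge1 (R : realFieldType) c : 1 <= fsize R Iinv c.
Proof. by case: Iinv_bij => _ card_ge2 _ _; rewrite ler1n (leq_trans _ (card_ge2 c)). Qed.

Lemma index_bijection_last :
  (2 <= n)%N -> exists2 l : 'I_(Ncal n), val l = (Ncal n).-1 & Iinv l = setT.
Proof.
case: Iinv_bij => _ _ Iinv_onto Iinv_mono n_ge2.
have [t Iinv_t] : exists t, Iinv t = setT by apply: Iinv_onto; rewrite cardsT card_ord.
have l_lt : ((Ncal n).-1 < Ncal n)%N by rewrite ltn_predL (leq_ltn_trans _ (ltn_ord t)).
exists (Ordinal l_lt) => //; apply/eqP/negPn/negP => Iinv_l_neq.
have /Iinv_mono /= : Iinv (Ordinal l_lt) \proper Iinv t by rewrite Iinv_t properT.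
by rewrite ltnNge -ltnS (ltn_predK l_lt) ltn_ord.
Qed.

End IndexBijection.

Lemma sum_Ostar {R : realFieldType} {n} (N : R) {l : 'I_(Ncal n)} :
  val l = (Ncal n).-1 -> forall A : {set 'I_(Ncal n)},
  \sum_(a in A) Ostar N a = if l \in A then N / 2 else 0.
Proof.
move=> l_last A.
have Ostar_l i : Ostar N i = if i == l then N / 2 else 0.
  by rewrite /Ostar -l_last (inj_eq val_inj).
case: ifP => l_in.
  rewrite (bigD1 l) //= Ostar_l eqxx big1 ?addr0 // => i /andP [_ i_neq].
  by rewrite Ostar_l (negbTE i_neq).
by apply: big1 => i i_in; rewrite Ostar_l; case: eqP => // i_l; rewrite -i_l i_in in l_in.
Qed.

Section ConstantKnowledge.
Variables (R : realFieldType) (n : nat) (Iinv : 'I_(Ncal n) -> {set 'I_n}) (N F : R).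
Hypotheses (N_gt0 : 0 < N) (N_le_F : N <= F).

Lemma Neff_const k : Neff (fun _ : 'I_n => N) F k = N.
Proof. by rewrite /Neff min_l. Qed.

Lemma sum_Neff_const c :
  \sum_(k in Iinv c) Neff (fun _ : 'I_n => N) F k = fsize R Iinv c * N.
Proof.
by rewrite (eq_bigr (fun _ => N)) => [|k _]; rewrite ?sumr_const ?mulr_natl ?Neff_const.
Qed.

Lemma prod_Neff_const_gt0 c : 0 < \prod_(k in Iinv c) Neff (fun _ : 'I_n => N) F k.
Proof. by apply: prodr_gt0 => k _; rewrite Neff_const. Qed.

Hypothesis Iinv_bij : is_index_bijection Iinv.
Variable l : 'I_(Ncal n).
Hypotheses (l_last : val l = (Ncal n).-1) (Iinv_l : Iinv l = setT).

Lemma Ostar_in_Omega : n%:R * N <= F -> Omega Iinv (fun _ => N) F (Ostar N).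
Proof.
move=> nN_le_F; have N_ge0 := ltW N_gt0.
have Ostar_ge0 (i : 'I_(Ncal n)) : 0 <= Ostar N i by rewrite /Ostar; case: ifP => _; lra.
split=> // [k|].
  by rewrite (sum_Ostar N l_last) Neff_const; case: ifP => _; lra.
have load_ge0 : 0 <= \sum_(c < Ncal n) (fsize R Iinv c - 1) * Ostar N c.
  by apply: sumr_ge0 => c _; rewrite mulr_ge0 // subr_ge0 fsize_ge1.
rewrite (eq_bigr (fun _ => N)) => [|k _]; last exact: Neff_const.
rewrite sumr_const card_ord -mulr_natl; lra.
Qed.

Lemma Tobj_le_Ostar O : (forall i, 0 <= O i) ->
  Tobj Iinv (fun _ => N) F O <= Tobj Iinv (fun _ => N) F (Ostar N).
Proof.
move=> O_ge0; apply: ler_sum => c _.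
rewrite !sum_Neff_const !(sum_Ostar N l_last).
have -> : l \in Sset Iinv c by rewrite inE Iinv_l subsetT.
have -> : l \in Bset Iinv c = false by rewrite inE Iinv_l properE subsetT andbF.
apply: objective_term_le; rewrite ?prod_Neff_const_gt0 ?fsize_ge1 //; exact: sumr_ge0.
Qed.

End ConstantKnowledge.

Theorem mainTheorem5 (R : realFieldType) (n : nat)
    (Iinv : 'I_(Ncal n) -> {set 'I_n}) (N F : R) :
  (2 <= n)%N ->
  is_index_bijection Iinv ->
  0 < N ->
  n%:R * N <= F ->
  Omega Iinv (fun _ => N) F (Ostar N) /\
  (forall O : 'I_(Ncal n) -> R,
     Omega Iinv (fun _ => N) F O ->
     Tobj Iinv (fun _ => N) F O <= Tobj Iinv (fun _ => N) F (Ostar N)).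
Proof.
move=> n_ge2 Iinv_bij N_gt0 nN_le_F.
have N_le_F : N <= F.
  have : 1 <= n%:R :> R by rewrite ler1n (leq_trans _ n_ge2).
  nra.
have [l l_last Iinv_l] := index_bijection_last Iinv_bij n_ge2.
split; first exact: (Ostar_in_Omega N_gt0 N_le_F Iinv_bij l_last).
by move=> O [O_ge0 _ _]; apply: (Tobj_le_Ostar N_gt0 N_le_F Iinv_bij l_last Iinv_l).
Qed.
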